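(* Let $(X_n)_{n\ge1}$ be a sequence of integer-valued random variables with $\mathbb E X_n=\mu_n$ and $\operatorname{var}(X_n)=\sigma_n^2$, where $\sigma_n\to\infty$ as $n\to\infty$. Let $(\varepsilon_n)$ be a sequence of positive numbers tending to $0$ such that $$\sup_{x\in\mathbb R}\left|\sigma_n\Pr\big(X_n=\lfloor\mu_n+x\sigma_n\rfloor\big)-\frac{e^{-x^2/2}}{\sqrt{2\pi}}\right|\le\varepsilon_n\quad\text{for all }n.$$ For each $n$ let $X_n'$ be a random variable independent of $X_n$ and having the same distribution as $X_n$. Then $$\Pr(X_n=X_n')=\frac{1}{2\sqrt\pi\,\sigma_n}+O\!\left(\frac{\varepsilon_n}{\sigma_n}+\frac{1}{\sigma_n^2}\right)\quad\text{as }n\to\infty.$$ *)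

From HB Require Import structures.
From mathcomp Require Import all_boot all_order all_algebra.
From mathcomp Require Import all_classical all_reals all_analysis.
Set Implicit Arguments. Unset Strict Implicit. Unset Printing Implicit Defensive.
Import Order.TTheory GRing.Theory Num.Theory.
Local Open Scope classical_set_scope.
Local Open Scope ring_scope.

Definition indep_RV d (T : measurableType d) (R : realType) (P : probability T R)
  (X Y : T -> R) : Prop :=
  forall A B : set R, measurable A -> measurable B ->
    P (X @^-1` A `&` Y @^-1` B) = (P (X @^-1` A) * P (Y @^-1` B))%E.

Definition same_distrib d (T : measurableType d) (R : realType) (P : probability T R)
  (X Y : T -> R) : Prop :=
  forall A : set R, measurable A -> P (X @^-1` A) = P (Y @^-1` A).

Definition int_valued (T : Type) (R : realType) (X : T -> R) : Prop :=
  forall t, exists z : int, X t = z%:~R.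

(* Write p_k = P(X = k) and phi for the standard normal density.  By independence,
   P(X = X') = sum_k p_k^2.  On the cell I_k = {x | floor (mu + x sigma) = k}, of
   length 1/sigma, the hypothesis reads |sigma p_k - phi| <= eps, and since
   f^2 - c^2 = (f - c)(f + c) the integral of phi^2 over I_k is within
   eps (p_k + int_{I_k} phi) of sigma p_k^2.  Summing over k, sigma P(X = X') is
   within 2 eps of int phi^2 = 1/(2 sqrt pi). *)

From HB Require Import structures.
From mathcomp Require Import all_boot all_order all_algebra.
From mathcomp Require Import all_classical all_reals all_analysis.
From mathcomp Require Import ring lra measurable_realfun.
Import Order.TTheory GRing.Theory Num.Theory.
Set Implicit Arguments. Unset Strict Implicit. Unset Printing Implicit Defensive.
Local Open Scope classical_set_scope.
Local Open Scope ring_scope.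

Definition int_of_nat (i : nat) : int :=
  if odd i then - (i./2.+1)%:Z else (i./2)%:Z.

Lemma int_of_nat_inj : injective int_of_nat.
Proof.
move=> i j; rewrite /int_of_nat.
have Hi := odd_double_half i; have Hj := odd_double_half j.
case: (odd i) Hi; case: (odd j) Hj => /= Hj Hi.
- by move/eqP; rewrite eqr_opp => /eqP [] E; rewrite -Hi -Hj E.
- by move=> E; have : (- (i./2.+1)%:Z < 0)%R by []; rewrite E.
- by move=> E; have : (- (j./2.+1)%:Z < 0)%R by []; rewrite -E.
- by move=> [] E; rewrite -Hi -Hj E.
Qed.

Lemma int_of_nat_surj (k : int) : exists i, int_of_nat i = k.
Proof.
case: k => m.
- by exists m.*2; rewrite /int_of_nat odd_double doubleK.
- by exists m.*2.+1; rewrite /int_of_nat /= odd_double /= uphalf_double NegzE.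
Qed.

Lemma le_nneseries_error (R : realType) (u v w z : nat -> \bar R) (e : R) :
  (forall i, 0 <= u i)%E -> (forall i, 0 <= v i)%E -> (forall i, 0 <= w i)%E ->
  (forall i, 0 <= z i)%E -> 0 <= e ->
  (forall i, u i <= v i + w i + e%:E * z i)%E ->
  (\sum_(0 <= i <oo) u i <=
   \sum_(0 <= i <oo) v i + \sum_(0 <= i <oo) w i + e%:E * \sum_(0 <= i <oo) z i)%E.
Proof.
move=> u0 v0 w0 z0 e0 le_uvwz.
rewrite -nneseriesZl; last by move=> i _; exact: z0.
have ez0 i : (0 <= e%:E * z i)%E by rewrite mule_ge0.
rewrite -nneseriesD // -nneseriesD => [|i _|//]; last by rewrite adde_ge0.
by apply: lee_nneseries => i _ //; exact: u0.
Qed.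

Lemma nneseries_EFinZl (R : realType) (x : R) (f : nat -> R) : (forall i, 0 <= f i) ->
  (\sum_(0 <= i <oo) (x * f i)%:E = x%:E * \sum_(0 <= i <oo) (f i)%:E)%E.
Proof.
move=> f0; rewrite -nneseriesZl; last by move=> i _; rewrite lee_fin.
by apply: eq_eseriesr => i _; rewrite EFinM.
Qed.

Section integer_valued.
Variables (d : measure_display) (T : measurableType d) (R : realType)
  (P : probability T R).

Definition int_fiber (X : T -> R) (k : int) := X @^-1` [set k%:~R].

Lemma measurable_int_fiber (X : {RV P >-> R}) k : measurable (int_fiber X k).
Proof. by apply: measurable_funPTI; exact: measurable_set1. Qed.

Lemma trivIset_int_fiber (X : T -> R) :
  trivIset setT (fun i => int_fiber X (int_of_nat i)).
Proof.
move=> i j _ _ [t [/= Xi Xj]].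
by apply/int_of_nat_inj/(@intr_inj R); rewrite -Xi -Xj.
Qed.

Lemma bigcup_int_fiber (X : T -> R) : int_valued X ->
  \bigcup_i int_fiber X (int_of_nat i) = setT.
Proof.
move=> iX; apply/seteqP; split => // t _.
have [k Xk] := iX t; have [i ik] := int_of_nat_surj k.
by exists i => //; rewrite /int_fiber /= Xk ik.
Qed.

Lemma nneseries_prob_int_fiber (X : {RV P >-> R}) : int_valued X ->
  (\sum_(0 <= i <oo) P (int_fiber X (int_of_nat i)) = 1)%E.
Proof.
move=> iX; rewrite -(probability_setT P) -(bigcup_int_fiber iX).
rewrite measure_bigcup //; last exact: trivIset_int_fiber.
  by apply: eq_eseriesl => i; rewrite in_setT.
by move=> i _; exact: measurable_int_fiber.
Qed.

Lemma measurable_eq_RV (X Y : {RV P >-> R}) : measurable [set t | X t = Y t].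
Proof.
rewrite (_ : [set t | X t = Y t] = (fun t => X t - Y t) @^-1` [set 0]).
  rewrite -[_ @^-1` _]setTI; apply: measurable_funB => //; exact: measurable_set1.
by apply/seteqP; split => t /= => [->|/eqP]; rewrite ?subrr // subr_eq0 => /eqP.
Qed.

Lemma prob_eq_iid (X Y : {RV P >-> R}) : int_valued X -> indep_RV P X Y ->
  same_distrib P X Y ->
  (P [set t | X t = Y t] =
   \sum_(0 <= i <oo) (P (int_fiber X (int_of_nat i)) * P (int_fiber X (int_of_nat i))))%E.
Proof.
move=> iX XY_indep XY_law.
have -> : [set t | X t = Y t] =
    \bigcup_i (int_fiber X (int_of_nat i) `&` int_fiber Y (int_of_nat i)).
  apply/seteqP; split => [t /= XYt|t [i _ [/= -> ->]] //].
  have [k Xk] := iX t; have [i ik] := int_of_nat_surj k.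
  by exists i => //; rewrite /int_fiber /= -XYt Xk ik.
rewrite measure_bigcup //; last first.
- move=> i j _ _ [t [[/= Xi _] [/= Xj _]]].
  by apply/int_of_nat_inj/(@intr_inj R); rewrite -Xi -Xj.
- by move=> i _; apply: measurableI; exact: measurable_int_fiber.
rewrite (eq_eseriesl _ (Q := xpredT)) => [|i]; last by rewrite in_setT.
apply: eq_eseriesr => i _.
rewrite [LHS]XY_indep ?measurable_set1 //.
by rewrite -XY_law ?measurable_set1.
Qed.

End integer_valued.

Section standard_normal.
Variable R : realType.

Lemma normal_pdf01E (x : R) :
  normal_pdf 0 1 x = expR (- (x ^+ 2) / 2) / Num.sqrt (2 * pi).
Proof.
rewrite /normal_pdf oner_eq0 /= /normal_peak /normal_fun subr0 expr1n mul1r.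
by rewrite mulrC mulr_natl.
Qed.

Lemma sqr_normal_pdf01 (x : R) : normal_pdf 0 1 x ^+ 2 = (2 * pi)^-1 * gauss_fun x.
Proof.
rewrite normal_pdf01E expr_div_n sqr_sqrtr ?mulr_ge0 ?pi_ge0 // mulrC.
by rewrite /gauss_fun -expRM_natl; congr (_ * expR _); field.
Qed.

Lemma measurable_sqr_normal_pdf01 : measurable_fun setT (fun x : R => normal_pdf 0 1 x ^+ 2).
Proof. by apply: measurable_funX; exact: measurable_normal_pdf. Qed.

Lemma integral_sqr_normal_pdf01 :
  (\int[lebesgue_measure]_x (normal_pdf 0 1 x ^+ 2)%:E = (1 / (2 * Num.sqrt pi))%:E :> \bar R)%E.
Proof.
under eq_integral do rewrite sqr_normal_pdf01 EFinM.
rewrite ge0_integralZl //=; last 3 first.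
- by apply/measurable_EFinP; exact: measurable_gauss_fun.
- by move=> x _; rewrite lee_fin gauss_fun_ge0.
- by rewrite lee_fin invr_ge0 mulr_ge0 ?pi_ge0.
rewrite integralT_gauss -EFinM -{1}(sqr_sqrtr (pi_ge0 R)); congr EFin.
by field; rewrite gt_eqF // sqrtr_gt0 pi_gt0.
Qed.

End standard_normal.

Section integral_on_small_set.
Variables (R : realType) (D : set R) (s : R).
Hypotheses (mD : measurable D) (lebD : lebesgue_measure D = (s^-1)%:E).

Lemma integral_cst_inv (r : R) : (\int[lebesgue_measure]_(x in D) r%:E = (r / s)%:E)%E.
Proof.
rewrite integral_cst // EFinM; congr (_ * _)%E; exact: lebD.
Qed.

Lemma le_integral_error (u v f : R -> R) (a e : R) :
  measurable_fun setT u -> measurable_fun setT v -> measurable_fun setT f ->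
  (forall x, 0 <= u x) -> (forall x, 0 <= v x) -> (forall x, 0 <= f x) ->
  0 <= a -> 0 <= e -> (forall x, D x -> u x <= v x + a + e * f x) ->
  (\int[lebesgue_measure]_(x in D) (u x)%:E <=
   \int[lebesgue_measure]_(x in D) (v x)%:E + (a / s)%:E
     + e%:E * \int[lebesgue_measure]_(x in D) (f x)%:E)%E.
Proof.
move=> mu mv mf u0 v0 f0 a0 e0 le_uvf.
have mE (g : R -> R) : measurable_fun setT g -> measurable_fun D (EFin \o g).
  by move=> mg; apply/measurable_EFinP; exact: measurable_funS mg.
have mef : measurable_fun setT (fun x => e * f x).
  by apply: measurable_funM => //; exact: measurable_cst.
have mvE := mE _ mv; have mefE := mE _ mef; have mfE := mE _ mf.
have maE : measurable_fun D (fun=> a%:E) by exact: measurable_cst.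
have maefE : measurable_fun D (fun x => a%:E + (e * f x)%:E)%E.
  exact: emeasurable_funD.
have v0E x : D x -> (0 <= (v x)%:E)%E by rewrite lee_fin.
have f0E x : D x -> (0 <= (f x)%:E)%E by rewrite lee_fin.
have a0E x : D x -> (0 <= a%:E)%E by rewrite lee_fin.
have ef0E x : D x -> (0 <= (e * f x)%:E)%E by rewrite lee_fin mulr_ge0.
have aef0E x : D x -> (0 <= a%:E + (e * f x)%:E)%E.
  by move=> Dx; exact: adde_ge0 (a0E x Dx) (ef0E x Dx).
have -> : (\int[lebesgue_measure]_(x in D) (v x)%:E + (a / s)%:E
     + e%:E * \int[lebesgue_measure]_(x in D) (f x)%:E =
    \int[lebesgue_measure]_(x in D) ((v x)%:E + (a%:E + (e * f x)%:E)))%E.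
  rewrite !ge0_integralD // integral_cst_inv addeA.
  by rewrite -ge0_integralZl.
apply: ge0_le_integral => //.
- by move=> x _; rewrite lee_fin.
- exact: mE.
- exact: emeasurable_funD.
- by move=> x Dx; rewrite -!EFinD lee_fin addrA le_uvf.
Qed.

End integral_on_small_set.

Lemma sqr_le_sqr_add_dist (R : realFieldType) (c f e : R) :
  0 <= c -> 0 <= f -> `|c - f| <= e -> f ^+ 2 <= c ^+ 2 + e * c + e * f.
Proof. by move=> c0 f0; rewrite ler_norml => /andP [? ?]; nra. Qed.

Section floor_cells.
Variables (R : realType) (m s : R).
Hypothesis s_gt0 : 0 < s.

Definition floor_cell (k : int) : set R :=
  `[(k%:~R - m) / s, (k%:~R + 1 - m) / s[%classic.

Lemma floor_cellP k x : floor_cell k x <-> Num.floor (m + x * s) = k.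
Proof.
rewrite /floor_cell /= in_itv /= ler_pdivrMr // ltr_pdivlMr // (rwP eqP).
by rewrite floor_eq intrD; split => /andP [? ?]; apply/andP; split; lra.
Qed.

Lemma measurable_floor_cell k : measurable (floor_cell k).
Proof. exact: measurable_itv. Qed.

Lemma lebesgue_measure_floor_cell k : lebesgue_measure (floor_cell k) = (s^-1)%:E.
Proof.
rewrite lebesgue_measure_itv /= lte_fin ltr_pM2r ?invr_gt0 // ifT; last lra.
by rewrite -EFinB; congr EFin; field; exact: lt0r_neq0.
Qed.

Lemma nneseries_integral_floor_cell (g : R -> R) :
  measurable_fun setT g -> (forall x, 0 <= g x) ->
  (\sum_(0 <= i <oo) \int[lebesgue_measure]_(x in floor_cell (int_of_nat i)) (g x)%:E
   = \int[lebesgue_measure]_x (g x)%:E)%E.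
Proof.
move=> mg g0; rewrite -ge0_integral_bigcup //.
- congr integral; apply/seteqP; split => // x _.
  have [i ix] := int_of_nat_surj (Num.floor (m + x * s)).
  by exists i => //; apply/floor_cellP.
- by move=> i; exact: measurable_floor_cell.
- by apply/measurable_EFinP; exact: measurable_funS mg.
- by move=> x _; rewrite lee_fin.
- move=> i j _ _ [x [/floor_cellP xi /floor_cellP xj]].
  by apply: int_of_nat_inj; rewrite -xi -xj.
Qed.

End floor_cells.

Section coincidence_probability.
Variables (d : measure_display) (T : measurableType d) (R : realType)
  (P : probability T R) (X Y : {RV P >-> R}) (m s e : R).
Hypotheses (iX : int_valued X) (XY_indep : indep_RV P X Y) (XY_law : same_distrib P X Y).
Hypotheses (s_gt0 : 0 < s) (e_ge0 : 0 <= e).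
Hypothesis local_limit : forall x,
  `| s * fine (P (X @^-1` [set (Num.floor (m + x * s))%:~R])) - normal_pdf 0 1 x | <= e.

Let p i := fine (P (int_fiber X (int_of_nat i))).
Let cell i := floor_cell m s (int_of_nat i).
Let a i := (\int[lebesgue_measure]_(x in cell i) (normal_pdf 0 1 x)%:E)%E.
Let b i := (\int[lebesgue_measure]_(x in cell i) (normal_pdf 0 1 x ^+ 2)%:E)%E.

Let prob_int_fiberE i : P (int_fiber X (int_of_nat i)) = (p i)%:E.
Proof. by rewrite fineK //; apply: fin_num_measure; exact: measurable_int_fiber. Qed.

Let p_ge0 i : 0 <= p i.
Proof. by rewrite fine_ge0 // measure_ge0. Qed.

Let near_cell i x : cell i x -> `|s * p i - normal_pdf 0 1 x| <= e.
Proof. by move=> /floor_cellP xi; rewrite /p /int_fiber -xi. Qed.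

Let cell_bounds i :
  (b i <= (s * p i ^+ 2)%:E + (e * p i)%:E + e%:E * a i)%E /\
  ((s * p i ^+ 2)%:E <= b i + (e * p i)%:E + e%:E * a i)%E.
Proof.
have mcell := measurable_floor_cell m s (int_of_nat i).
have lebcell := lebesgue_measure_floor_cell m s_gt0 (int_of_nat i).
have s_neq0 : s != 0 by exact: lt0r_neq0.
have -> : s * p i ^+ 2 = (s * p i) ^+ 2 / s by field.
have -> : e * p i = e * (s * p i) / s by field.
rewrite -(integral_cst_inv mcell lebcell).
have mpdf := @measurable_normal_pdf R 0 1.
have msqr := @measurable_sqr_normal_pdf01 R.
have pdf_ge0 (x : R) : 0 <= normal_pdf 0 1 x by exact: normal_pdf_ge0.
have sqr_ge0 (x : R) : 0 <= normal_pdf 0 1 x ^+ 2 by rewrite exprn_ge0.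
have sp_ge0 : 0 <= s * p i by rewrite mulr_ge0 // ltW.
have cst_ge0 (_ : R) : 0 <= (s * p i) ^+ 2 by rewrite exprn_ge0.
have esp_ge0 : 0 <= e * (s * p i) by rewrite mulr_ge0.
split; apply: le_integral_error => // x /near_cell close.
- exact: sqr_le_sqr_add_dist.
- by rewrite addrAC; apply: sqr_le_sqr_add_dist; rewrite // distrC.
Qed.

Lemma coincidence_prob_near_gaussian :
  `| fine (P [set t | X t = Y t]) - 1 / (2 * Num.sqrt pi * s) | <= 2 * e / s.
Proof.
set r := fine _; set Q : R := 1 / (2 * Num.sqrt pi).
have a_ge0 i : (0 <= a i)%E by apply: integral_ge0 => x _; rewrite lee_fin normal_pdf_ge0.
have b_ge0 i : (0 <= b i)%E.
  by apply: integral_ge0 => x _; rewrite lee_fin exprn_ge0 ?normal_pdf_ge0.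
have sum_a : (\sum_(0 <= i <oo) a i = 1)%E.
  rewrite nneseries_integral_floor_cell ?integral_normal_pdf //.
  - exact: measurable_normal_pdf.
  - by move=> x; exact: normal_pdf_ge0.
have sum_b : (\sum_(0 <= i <oo) b i = Q%:E)%E.
  rewrite nneseries_integral_floor_cell ?integral_sqr_normal_pdf01 //.
  - exact: measurable_sqr_normal_pdf01.
  - by move=> x; rewrite exprn_ge0 ?normal_pdf_ge0.
have sum_ep : (\sum_(0 <= i <oo) (e * p i)%:E = e%:E)%E.
  rewrite nneseries_EFinZl // -[RHS]mule1 -(nneseries_prob_int_fiber iX).
  by congr (_ * _)%E; apply: eq_eseriesr => i _; rewrite prob_int_fiberE.
have sum_sp2 : (\sum_(0 <= i <oo) (s * p i ^+ 2)%:E = (s * r)%:E)%E.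
  rewrite nneseries_EFinZl => [|i]; last by rewrite exprn_ge0.
  have PXY := prob_eq_iid iX XY_indep XY_law.
  rewrite EFinM /r fineK; last by apply: fin_num_measure; exact: measurable_eq_RV.
  rewrite PXY; congr (_ * _)%E; apply: eq_eseriesr => i _.
  by rewrite prob_int_fiberE -EFinM expr2.
have sp2_ge0 i : (0 <= (s * p i ^+ 2)%:E)%E by rewrite lee_fin mulr_ge0 ?exprn_ge0 // ltW.
have ep_ge0 i : (0 <= (e * p i)%:E)%E by rewrite lee_fin mulr_ge0.
have := le_nneseries_error b_ge0 sp2_ge0 ep_ge0 a_ge0 e_ge0 (fun i => (cell_bounds i).1).
rewrite sum_b sum_sp2 sum_ep sum_a mule1 -!EFinD lee_fin => upper.
have := le_nneseries_error sp2_ge0 b_ge0 ep_ge0 a_ge0 e_ge0 (fun i => (cell_bounds i).2).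
rewrite sum_b sum_sp2 sum_ep sum_a mule1 -!EFinD lee_fin => lower.
have sqrtpi_gt0 : 0 < Num.sqrt (pi : R) by rewrite sqrtr_gt0 pi_gt0.
rewrite (_ : r - _ = (s * r - Q) / s); last by rewrite /Q; field; rewrite !gt_eqF.
rewrite normrM [`|s^-1|]gtr0_norm ?invr_gt0 // ler_pM2r ?invr_gt0 //.
by rewrite ler_norml; apply/andP; split; lra.
Qed.

End coincidence_probability.

Theorem lemma2 (d : measure_display) (T : measurableType d) (R : realType)
  (P : probability T R) (X X' : nat -> {RV P >-> R})
  (mu sigma eps : nat -> R) :
  (forall n, int_valued (X n)) ->
  (forall n, P.-integrable setT (EFin \o X n)) ->
  (forall n, ('E_P[X n] = (mu n)%:E)%E) ->
  (forall n, 0 <= sigma n) ->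
  (forall n, ('V_P[X n] = (sigma n ^+ 2)%:E)%E) ->
  sigma @ \oo --> +oo ->
  (forall n, 0 < eps n) ->
  eps @ \oo --> 0 ->
  (forall n (x : R),
     `| sigma n * fine (P (X n @^-1` [set ((Num.floor (mu n + x * sigma n))%:~R : R)]))
        - expR (- (x ^+ 2) / 2) / Num.sqrt (2 * pi) | <= eps n) ->
  (forall n, indep_RV P (X n) (X' n)) ->
  (forall n, same_distrib P (X n) (X' n)) ->
  exists C : R, exists N : nat, forall n, (N <= n)%N ->
    `| fine (P [set t | X n t = X' n t]) - 1 / (2 * Num.sqrt pi * sigma n) |
      <= C * (eps n / sigma n + 1 / sigma n ^+ 2).
Proof.
move=> iX _ _ _ _ sigma_oo eps_gt0 _ local_limit XX'_indep XX'_law.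
have [N _ sigma_gt0] := proj1 (cvgryPgt sigma) sigma_oo 0.
exists 2, N => n /sigma_gt0 s_gt0.
apply: le_trans (coincidence_prob_near_gaussian (iX n) (XX'_indep n) (XX'_law n)
  s_gt0 (ltW (eps_gt0 n)) _) _.
  by move=> x; rewrite normal_pdf01E; exact: local_limit.
by rewrite -mulrA ler_pM2l // lerDl divr_ge0 // exprn_ge0 // ltW.
Qed.
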